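(* For each $n\in\omega$ the set $N_n:=\{x\in 3^\omega: x(i)\neq 2 \text{ for all } i\geq n\}$ is $\mathbb{T}$-nowhere dense, but $\bigcup_{n\in\omega}N_n$ is not $\mathbb{T}$-nowhere dense.
   Context: $\mathbb{T}$ is the tree-forcing (ordered by inclusion) consisting of perfect trees $p\subseteq 3^{<\omega}$ together with a set $A_p\subseteq\omega$ (the splitting levels of $p$) such that: for every $t\in p$, $|t|\in A_p$ iff $t$ is a splitting node of $p$; every splitting node $t$ is fully splitting (i.e. $t^\frown i\in p$ for every $i\in 3$); for every $s\supseteq \mathrm{stem}(p)$ which is not splitting, $s^\frown 2\notin p$; and for all non-splitting $s,t\in p$ with $|s|=|t|$ and all $i\in 2$, $s^\frown i\in p\Leftrightarrow t^\frown i\in p$. Here $s^\frown i$ denotes $s$ extended by the value $i$. A set $X$ is $\mathbb{T}$-nowhere dense if for every $p\in\mathbb{T}$ there is $q\leq p$ with $[q]\cap X=\emptyset$, where $[q]$ is the set of branches of $q$. *)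

From mathcomp Require Import all_boot.
Set Implicit Arguments. Unset Strict Implicit. Unset Printing Implicit Defensive.

(* Finite sequences in 3^{<omega} are [seq 'I_3]; reals in 3^omega are
   functions [nat -> 'I_3]. A tree is a predicate on [seq 'I_3]. *)

Definition two : 'I_3 := @Ordinal 3 2 isT.

Definition tree3 := seq 'I_3 -> Prop.

Definition is_tree (p : tree3) : Prop :=
  p [::] /\ forall t n, p t -> p (take n t).

Definition splitting (p : tree3) (t : seq 'I_3) : Prop :=
  p t /\ exists i j : 'I_3, i != j /\ p (rcons t i) /\ p (rcons t j).

Definition perfect (p : tree3) : Prop :=
  is_tree p /\ forall t, p t -> exists s, prefix t s /\ splitting p s.

Definition is_stem (p : tree3) (t : seq 'I_3) : Prop :=
  splitting p t /\ forall s, p s -> prefix t s \/ prefix s t.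

(* membership in the forcing T, witnessed by the set A of splitting levels *)
Definition T_cond_with (p : tree3) (A : nat -> Prop) : Prop :=
  [/\ perfect p,
      (forall t, p t -> (A (size t) <-> splitting p t)),
      (forall t, splitting p t -> forall i : 'I_3, p (rcons t i)),
      (forall st s, is_stem p st -> prefix st s -> p s -> ~ splitting p s ->
          ~ p (rcons s two))
    & (forall s t, p s -> p t -> ~ splitting p s -> ~ splitting p t ->
          size s = size t -> forall i : 'I_3, i != two ->
          (p (rcons s i) <-> p (rcons t i)))].

Definition T_cond (p : tree3) : Prop := exists A, T_cond_with p A.

Definition T_le (q p : tree3) : Prop := forall t, q t -> p t.

Definition branch (q : tree3) (x : nat -> 'I_3) : Prop :=
  forall n, q (mkseq x n).

Definition T_nowhere_dense (X : (nat -> 'I_3) -> Prop) : Prop :=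
  forall p, T_cond p -> exists q, T_cond q /\ T_le q p /\
     forall x, branch q x -> ~ X x.

Definition N_set (n : nat) (x : nat -> 'I_3) : Prop :=
  forall i, n <= i -> x i != two.

From Stdlib Require Import Classical IndefiniteDescription Wf_nat.
From mathcomp Require Import all_boot.
Set Implicit Arguments. Unset Strict Implicit. Unset Printing Implicit Defensive.

(* Given a condition p and n, take a splitting node t of p of length >= n
   above the stem. Then t⌢2 is in p, and the restriction of p to the nodes
   comparable with t⌢2 is again a condition; all its branches take the value 2
   at |t| >= n, so they avoid N_n.
   Conversely, in any condition q a non-splitting node above the stem never
   continues with 2, while a splitting node may continue with 0. Following such
   successors from the stem gives a branch of q in N_(|stem|). Hence no
   condition below the full tree avoids the union of the N_n. *)

Section Prefix.
Variable T : eqType.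
Implicit Types s t : seq T.

Lemma prefix_takeE s t : prefix s t -> take (size s) t = s.
Proof. by rewrite prefixE => /eqP. Qed.

Lemma prefix_size_eq s t : prefix s t -> size s = size t -> s = t.
Proof. by move=> /prefix_takeE st e; rewrite -st e take_size. Qed.

Lemma prefix_common_size s1 s2 t :
  prefix s1 t -> prefix s2 t -> size s1 = size s2 -> s1 = s2.
Proof. by move=> /prefix_takeE h1 /prefix_takeE h2 e; rewrite -h1 -h2 e. Qed.

Lemma prefix_total s1 s2 t : prefix s1 t -> prefix s2 t -> prefix s1 s2 \/ prefix s2 s1.
Proof.
move=> /prefix_takeE h1 /prefix_takeE h2.
case: (leqP (size s1) (size s2)) => [le12 | /ltnW le21]; [left | right];
  rewrite prefixE; apply/eqP.
- by rewrite -h2 take_takel // h1.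
- by rewrite -h1 take_takel // h2.
Qed.

Lemma prefix_by_size s t : prefix s t \/ prefix t s -> size s <= size t -> prefix s t.
Proof.
case=> // ts le_st; have e : size t = size s by apply/eqP; rewrite eqn_leq size_prefix.
by rewrite (prefix_size_eq ts e) prefix_refl.
Qed.

Lemma nth_prefix x0 s t k : prefix s t -> k < size s -> nth x0 s k = nth x0 t k.
Proof. by move=> /prefix_takeE st lt_k; rewrite -{1}st nth_take. Qed.

End Prefix.

Section Trees.
Variable p : tree3.
Hypothesis p_tree : is_tree p.

Lemma tree_rcons s i : p (rcons s i) -> p s.
Proof.
by move=> psi; have := p_tree.2 _ (size s) psi; rewrite -cats1 take_size_cat.
Qed.

Lemma eq_nodes_below_splitting k s s' :
  (forall t, splitting p t -> k <= size t) ->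
  p s -> p s' -> size s = k -> size s' = k -> s = s'.
Proof.
move=> low; elim: k s s' low => [|k IH] s s' low ps ps' hs hs'.
  by rewrite (size0nil hs) (size0nil hs').
case/lastP: s ps hs => [//|r a] pra; case/lastP: s' ps' hs' => [//|r' b] prb.
rewrite !size_rcons => -[hr'] [hr].
have er : r = r'.
  by apply: IH _ _ _ (tree_rcons pra) (tree_rcons prb) hr hr' => t /low /ltnW.
rewrite -er in prb *; case: (eqVneq a b) => [-> // | ne_ab].
have : k.+1 <= size r by apply: low; split; [exact: tree_rcons pra | exists a, b].
by rewrite hr ltnn.
Qed.

End Trees.

Section Perfect.
Variable p : tree3.
Hypothesis p_perfect : perfect p.

Lemma perfect_splitting_above n : exists t, splitting p t /\ n <= size t.
Proof.
case: p_perfect => [[p0 _] perf]; elim: n => [|n [t [[_ [i [j [_ [pti _]]]]] le_nt]]].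
  by have [s [_ sp]] := perf _ p0; exists s.
have [s [ts sp]] := perf _ pti; exists s; split => //.
by apply: leq_trans (size_prefix ts); rewrite size_rcons.
Qed.

(* The stem is a splitting node of minimal length. *)
Lemma perfect_stem : exists st, is_stem p st.
Proof.
have [p_tree _] := p_perfect; have eq_nodes := eq_nodes_below_splitting p_tree.
pose lvl k := exists t, splitting p t /\ size t = k.
have ex_lvl : exists k, lvl k.
  by have [t0 [sp0 _]] := perfect_splitting_above 0; exists (size t0), t0.
have [m [[[t [spt <-]] min_t] _]] :=
  @dec_inh_nat_subset_has_unique_least_element lvl (fun k => classic (lvl k)) ex_lvl.
have low t' : splitting p t' -> size t <= size t'.
  by move=> sp'; apply/leP; apply: min_t; exists t'.
exists t; split => // s ps; case: (leqP (size s) (size t)) => [le_st | /ltnW le_ts].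
- right; rewrite (@eq_nodes (size s) s (take (size s) t)) ?prefix_take //.
  + by move=> t' /low; apply: leq_trans.
  + exact: p_tree.2 _ _ spt.1.
  + by rewrite size_takel.
- left; rewrite -(@eq_nodes (size t) (take (size t) s) t) ?prefix_take //.
  + exact: p_tree.2.
  + exact: spt.1.
  + by rewrite size_takel.
Qed.

End Perfect.

Section Restriction.
Variables (p : tree3) (u : seq 'I_3).

Definition restriction : tree3 := fun x => p x /\ (prefix x u \/ prefix u x).

Lemma restriction_le : T_le restriction p.
Proof. by move=> x []. Qed.

Lemma restriction_above x : restriction x -> size u <= size x -> prefix u x.
Proof. by case=> _ /or_comm; apply: prefix_by_size. Qed.

Lemma restriction_below x : restriction x -> size x <= size u -> prefix x u.
Proof. by case=> _; apply: prefix_by_size. Qed.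

Lemma splitting_restriction y : splitting restriction y <-> prefix u y /\ splitting p y.
Proof.
split.
- move=> [qy [i [j [ne_ij [qi qj]]]]]; split; last first.
    by split; [exact: qy.1 | exists i, j; split; [|split; [exact: qi.1 | exact: qj.1]]].
  case: (leqP (size u) (size y)) => [|lt_yu]; first exact: restriction_above.
  have le_iu : size (rcons y i) <= size u by rewrite size_rcons.
  have le_ju : size (rcons y j) <= size u by rewrite size_rcons.
  have eq_ij : rcons y i = rcons y j.
    by apply: prefix_common_size (restriction_below qi le_iu) (restriction_below qj le_ju) _;
      rewrite !size_rcons.
  by move: ne_ij; rewrite (rcons_injr _ eq_ij) eqxx.
- move=> [uy [py [i [j [ne_ij [pi pj]]]]]]; split; first by split; [|right].
  by exists i, j; do !split => //; right; apply: prefix_trans uy (prefix_rcons _ _).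
Qed.

Lemma is_tree_restriction : is_tree p -> is_tree restriction.
Proof.
case=> p0 ptake; split; first by split; [|left; exact: prefix0s].
move=> x k [px [xu | ux]]; split; [exact: ptake | | exact: ptake |].
- by left; apply: prefix_trans (prefix_take _ _) xu.
- exact: prefix_total (prefix_take _ _) ux.
Qed.

Lemma perfect_restriction : perfect p -> p u -> perfect restriction.
Proof.
case=> ptree perf pu; split; first exact: is_tree_restriction.
move=> x [px xu]; have [y pyx uy] : exists2 y, p y & prefix x y /\ prefix u y.
  by case: xu => [xu | ux]; [exists u; [|split; last exact: prefix_refl] | exists x;
    [|split; first exact: prefix_refl]].
have [s [ys sp]] := perf _ pyx; exists s; split; first exact: prefix_trans uy.1 ys.
by apply/splitting_restriction; split; first exact: prefix_trans uy.2 ys.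
Qed.

Lemma branch_restriction x : branch restriction x -> mkseq x (size u) = u.
Proof.
move=> /(_ (size u)) qx; apply: prefix_size_eq; last by rewrite size_mkseq.
by apply: restriction_below; rewrite ?size_mkseq.
Qed.

Lemma T_cond_with_restriction A st :
  T_cond_with p A -> is_stem p st -> prefix st u -> p u ->
  T_cond_with restriction (fun k => A k /\ size u <= k).
Proof.
case=> hp c2 c3 c4 c5 hst st_u pu; have nsp_restr s :
  prefix u s -> ~ splitting restriction s -> ~ splitting p s.
  by move=> us nsp sp; apply: nsp; apply/splitting_restriction.
split.
- exact: perfect_restriction.
- move=> t qt; rewrite splitting_restriction -(c2 _ qt.1).
  split=> [[At le_ut] | [ut At]]; first by split; first exact: restriction_above.
  by split; last exact: size_prefix.
- move=> t /splitting_restriction [ut spt] i; split; first exact: c3.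
  by right; apply: prefix_trans ut (prefix_rcons _ _).
- move=> stq s /proj1 /splitting_restriction [u_stq _] stq_s qs nsp [ps2 _].
  have us := prefix_trans u_stq stq_s.
  exact: (c4 st s hst (prefix_trans st_u us) qs.1 (nsp_restr _ us nsp) ps2).
- move=> s s' qs qs' nsp nsp' e i ne_i2.
  case: (leqP (size u) (size s)) => [le_us | /ltnW le_su].
  + have us := restriction_above qs le_us.
    have us' : prefix u s' by apply: restriction_above; rewrite // -e.
    have := c5 _ _ qs.1 qs'.1 (nsp_restr _ us nsp) (nsp_restr _ us' nsp') e i ne_i2.
    have ext y : prefix u y -> restriction (rcons y i) <-> p (rcons y i).
      move=> uy; split=> [[] // | pyi]; split=> //.
      by right; apply: prefix_trans uy (prefix_rcons _ _).
    by rewrite ext // ext.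
  + have su' : prefix s' u by apply: restriction_below; rewrite // -e.
    by rewrite (prefix_common_size (restriction_below qs le_su) su' e).
Qed.

End Restriction.

Lemma T_nowhere_dense_N_set n : T_nowhere_dense (N_set n).
Proof.
move=> p [A hpA]; case: (hpA) => hp _ c3 _ _.
have [st hst] := perfect_stem hp.
have [t [spt le_t]] := perfect_splitting_above hp (n + size st).
have st_t : prefix st t.
  by apply: prefix_by_size (hst.2 _ spt.1) _; apply: leq_trans le_t; apply: leq_addl.
pose u := rcons t two; have st_u : prefix st u := prefix_trans st_t (prefix_rcons _ _).
exists (restriction p u); split.
  by exists (fun k => A k /\ size u <= k); apply: T_cond_with_restriction st_u (c3 _ spt _).
split=> [|x /branch_restriction xu]; first exact: restriction_le.
have : x (size t) = two.
  rewrite -(nth_mkseq ord0 x (ltnSn (size t))) -(size_rcons t two) xu.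
  by rewrite nth_rcons ltnn eqxx.
move=> x2 hN; suff : x (size t) != two by rewrite x2 eqxx.
by apply: hN; apply: leq_trans le_t; apply: leq_addr.
Qed.

(* A non-splitting node above the stem has a successor on the way to a
   splitting extension, and by the stem condition it is not [two]. *)
Lemma T_cond_successor_ne_two q A st s :
  T_cond_with q A -> is_stem q st -> q s -> prefix st s ->
  exists2 i, i != two & q (rcons s i).
Proof.
case=> [[[_ qtake] perf] _ c3 c4 _] hst qs st_s.
case: (classic (splitting q s)) => [sp | nsp]; first by exists ord0; last exact: c3.
have [s' [ss' sp']] := perf _ qs.
have lt_ss' : size s < size s'.
  rewrite ltn_neqAle size_prefix // andbT; apply/negP => /eqP e.
  by apply: nsp; rewrite (prefix_size_eq ss' e).
have qsi : q (rcons s (nth ord0 s' (size s))).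
  by rewrite -{1}(prefix_takeE ss') -take_nth //; apply: qtake sp'.1.
exists (nth ord0 s' (size s)) => //; apply/eqP => e2.
by apply: (c4 st s hst st_s qs nsp); rewrite -e2.
Qed.

Lemma branch_of_successors (p : tree3) (ok : pred 'I_3) st :
  is_tree p -> p st ->
  (forall s, p s -> prefix st s -> exists2 i, ok i & p (rcons s i)) ->
  exists x, branch p x /\ forall k, size st <= k -> ok (x k).
Proof.
move=> [_ ptake] pst succ.
have [f fP] : exists f : seq 'I_3 -> 'I_3,
    forall s, p s -> prefix st s -> ok (f s) /\ p (rcons s (f s)).
  apply: (functional_choice (fun s i => p s -> prefix st s -> ok i /\ p (rcons s i))) => s.
  case: (classic (p s /\ prefix st s)) => [[ps st_s] | nps].
    by have [i oki psi] := succ s ps st_s; exists i.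
  by exists ord0 => ps st_s; case: nps.
pose node k := iter k (fun s => rcons s (f s)) st.
have node_in k : p (node k) /\ prefix st (node k).
  elim: k => [|k [pk st_k]]; first by split; last exact: prefix_refl.
  by split; [exact: (fP _ pk st_k).2 | exact: prefix_trans st_k (prefix_rcons _ _)].
have size_node k : size (node k) = size st + k.
  by elim: k => [|k IH]; rewrite ?addn0 //= size_rcons IH addnS.
have node_mono a b : a <= b -> prefix (node a) (node b).
  move/subnK <-; elim: (b - a) => [|d IH]; first exact: prefix_refl.
  exact: prefix_trans IH (prefix_rcons _ _).
pose x k := nth ord0 (node k.+1) k.
have x_node k m : k < size (node m) -> x k = nth ord0 (node m) k.
  move=> lt_km; case: (leqP m k.+1) => [/node_mono le | /ltnW /node_mono le].
  - by rewrite (nth_prefix _ le lt_km).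
  - by rewrite /x (nth_prefix _ le) // size_node addnS ltnS leq_addl.
exists x; split.
- move=> m; have -> : mkseq x m = take m (node m); last exact: ptake (node_in m).1.
  apply: (@eq_from_nth _ ord0); first by rewrite size_mkseq size_takel // size_node leq_addl.
  move=> k; rewrite size_mkseq => lt_km.
  by rewrite nth_mkseq // nth_take // (x_node k m) // size_node ltn_addl.
- move=> k le_k; set j := k - size st.
  have size_j : size (node j) = k by rewrite size_node subnKC.
  rewrite (x_node k j.+1) /=; last by rewrite size_rcons size_j.
  rewrite nth_rcons size_j ltnn eqxx.
  exact: (fP _ (node_in j).1 (node_in j).2).1.
Qed.

Lemma T_cond_full : T_cond (fun _ => True).
Proof.
have sp t : splitting (fun _ => True) t by split => //; exists ord0, two.
exists (fun _ => True); split=> [|//|//|st s _ _ _ /(_ (sp s)) //|s t _ _ /(_ (sp s)) //].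
by split=> // t _; exists t; split; [exact: prefix_refl | exact: sp].
Qed.

Lemma not_T_nowhere_dense_union_N_set :
  ~ T_nowhere_dense (fun x => exists n, N_set n x).
Proof.
move/(_ _ T_cond_full) => [q [[A hqA] [_ avoid]]]; have [hq _ _ _ _] := hqA.
have [st hst] := perfect_stem hq.
have [x [bx hx]] := branch_of_successors (ok := fun i => i != two) hq.1 hst.1.1
  (fun s => T_cond_successor_ne_two hqA hst).
by apply: (avoid x bx); exists (size st).
Qed.

Theorem mainTheorem3 :
  (forall n : nat, T_nowhere_dense (N_set n)) /\
  ~ T_nowhere_dense (fun x => exists n : nat, N_set n x).
Proof.
split; [exact: T_nowhere_dense_N_set | exact: not_T_nowhere_dense_union_N_set].
Qed.
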